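(* Let $P$ be a finite $(3+1)$-free poset with clone sets $C_1,\dots,C_r$ and tangles $T_1,\dots,T_s$ (the parts of $P$, which partition $P$). For each part $X$, regard $\mathrm{Aut}(X)$, the automorphism group of the induced subposet on $X$, as a group of permutations of $P$ acting as the identity on $P\setminus X$. Then each such permutation is an automorphism of $P$, and \[\mathrm{Aut}(P)=\prod_{i=1}^r\mathrm{Aut}(C_i)\times\prod_{j=1}^s\mathrm{Aut}(T_j),\] i.e. the natural map from this direct product to $\mathrm{Aut}(P)$ is a group isomorphism.
   Context: A poset $P$ is $(3+1)$-free if there are no $a,b,c,d\in P$ with $a<b<c$ and $d$ incomparable to each of $a,b,c$. For $a\in P$ let $D_a=\{x\in P:x<a\}$, $U_a=\{x\in P:x>a\}$. Write $a\mathrel{\top}b$ if neither of $D_a,D_b$ contains the other, $a\mathrel{\bot}b$ if neither of $U_a,U_b$ contains the other, and $a\approx b$ if $D_a=D_b$ and $U_a=U_b$. A top of a tangle is a subset $A\subseteq P$ with $|A|\ge2$ that is a connected component of the graph on $P$ with edges $\{a,b\}$ for $a\mathrel{\top}b$; a bottom of a tangle is defined in the same way using $\bot$. A top $A$ and bottom $B$ are matched if there are distinct $a_1,a_2\in A$, $b_1,b_2\in B$ with $b_1<a_1$, $b_2<a_2$ and the pairs $\{a_1,a_2\},\{b_1,b_2\},\{b_1,a_2\},\{b_2,a_1\}$ incomparable; in a $(3+1)$-free poset this is a perfect matching between tops and bottoms of tangles. A tangle is a matched pair $(A,B)$, identified with the set $A\cup B$ and its induced subposet. A clone set is an equivalence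 class of $\approx$ restricted to $P\setminus\bigcup_j (A_j\cup B_j)$, where $(A_j,B_j)$ range over the tangles. Clone sets and tangles are called the parts of $P$. *)

From HB Require Import structures.
From mathcomp Require Import all_boot all_order all_fingroup.
Set Implicit Arguments. Unset Strict Implicit. Unset Printing Implicit Defensive.
Import Order.TTheory.
Local Open Scope order_scope.

Section PosetParts.
Variables (disp : Order.disp_t) (T : finPOrderType disp).

Definition free31 : bool :=
  [forall a : T, forall b : T, forall c : T, forall d : T,
     ~~ [&& a < b, b < c, ~~ (d >=< a), ~~ (d >=< b) & ~~ (d >=< c)]].

Definition Dset (a : T) : {set T} := [set x | x < a].
Definition Uset (a : T) : {set T} := [set x | a < x].

Definition topr : rel T := fun a b =>
  ~~ (Dset a \subset Dset b) && ~~ (Dset b \subset Dset a).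
Definition botr : rel T := fun a b =>
  ~~ (Uset a \subset Uset b) && ~~ (Uset b \subset Uset a).
Definition approx : rel T := fun a b => (Dset a == Dset b) && (Uset a == Uset b).

Definition big_components (e : rel T) : {set {set T}} :=
  [set A : {set T} | (1 < #|A|)%N && [exists a, A == [set y | connect e a y]]].

Definition tops : {set {set T}} := big_components topr.
Definition bottoms : {set {set T}} := big_components botr.

Definition matched (A B : {set T}) : bool :=
  [exists a1 in A, exists a2 in A, exists b1 in B, exists b2 in B,
    [&& a1 != a2, b1 != b2, b1 < a1, b2 < a2,
        ~~ (a1 >=< a2), ~~ (b1 >=< b2), ~~ (b1 >=< a2) & ~~ (b2 >=< a1)]].

(* tangles, identified with the union of their top and bottom *)
Definition tangles : {set {set T}} :=
  [set A :|: B | A in tops, B in bottoms & matched A B].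

Definition tangle_free_part : {set T} := ~: \bigcup_(X in tangles) X.

Definition clone_sets : {set {set T}} :=
  [set [set y in tangle_free_part | approx x y] | x in tangle_free_part].

Definition parts : {set {set T}} := clone_sets :|: tangles.

Definition AutP : {set {perm T}} :=
  [set s : {perm T} | [forall x, forall y, (s x <= s y) == (x <= y)]].

Definition AutPart (X : {set T}) : {set {perm T}} :=
  [set s : {perm T} | perm_on X s &&
     [forall x in X, forall y in X, (s x <= s y) == (x <= y)]].

End PosetParts.

From HB Require Import structures.
From mathcomp Require Import all_boot all_order all_fingroup.
Set Implicit Arguments. Unset Strict Implicit. Unset Printing Implicit Defensive.
Import Order.TTheory.
Local Open Scope order_scope.

(* Both [topr a b] and [botr c d] are witnessed by induced 2+2's [c < a, d < b]
   ("crossings"), and walking along a top component moves the feet of such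
   crossings inside one bottom component and conversely; this is what matches tops
   with bottoms. (3+1)-freeness forces ⊤-related elements to have the same up-set
   and ⊥-related elements the same down-set, so no element is both ⊤- and
   ⊥-related to something, tangles are disjoint, and an element outside a tangle
   compares in the same way with all elements of its top, and with all elements of
   its bottom. Hence an automorphism of a part, extended by the identity, is an
   automorphism of P. Conversely an automorphism s of P maps D_x onto D_{s x}, so
   these down-sets are equal or ⊤-related, and likewise for up-sets: s stabilises
   every tangle and every clone set. So Aut(P) splits over each part X, and as the
   parts partition P it is the direct product of the subgroups Aut(P) ∩ Sym(X). *)

Lemma eq_card_subset_or (T : finType) (A B : {set T}) : #|A| = #|B| ->
  A = B \/ ~~ (A \subset B) && ~~ (B \subset A).
Proof.
move=> eAB; have [AB|nAB] := boolP (A \subset B).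
  by left; apply/eqP; rewrite eqEcard AB eAB leqnn.
have [BA|nBA] := boolP (B \subset A); last by right.
by left; apply/esym/eqP; rewrite eqEcard BA eAB leqnn.
Qed.

Section SplitSupports.
Local Open Scope group_scope.
Variables (T : finType) (G : {group {perm T}}).

Definition splits_over (X : {set T}) :=
  (G \subset 'N(X | 'P)) && [forall s in G, restr_perm X s \in G].

Lemma dprod_Sym_setU (X U : {set T}) : splits_over X -> [disjoint X & U] ->
  (G :&: Sym X) \x (G :&: Sym U) = G :&: Sym (X :|: U).
Proof.
case/andP=> /subsetP nXG /forall_inP restrG dXU.
have onXU (V : {set T}) (s : {perm T}) :
    perm_on V s -> V \subset X :|: U -> perm_on (X :|: U) s.
  exact: subset_trans.
rewrite dprodE.
- apply/setP=> s; apply/mulsgP/idP=> [[t u /setIP[Gt Xt] /setIP[Gu Uu] ->]|].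
    rewrite !inE in Xt Uu; rewrite !inE groupM //=.
    by rewrite perm_onM ?(onXU _ _ Xt) ?(onXU _ _ Uu) ?subsetUl ?subsetUr.
  case/setIP=> Gs; rewrite inE => XUs; set t := restr_perm X s.
  have Xt : perm_on X t := restr_perm_on X s.
  exists t (t^-1 * s); rewrite ?mulKVg //; first by rewrite !inE restrG.
  rewrite !inE groupM ?groupV ?restrG //; apply/subsetP=> x; rewrite inE permM.
  apply: contraR => Ux; have [xX|xX] := boolP (x \in X).
    have tx : t^-1 x \in X by rewrite perm_closed // perm_onV.
    by rewrite -(restr_permE (nXG s Gs) tx) permKV.
  rewrite (out_perm (perm_onV Xt) xX) (out_perm XUs) //.
  by rewrite inE negb_or xX.
- apply/subsetP=> u /setIP[_ Uu]; apply/centP=> t /setIP[_ Xt].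
  by apply: esym; apply: perm_onC dXU; rewrite -?inE.
apply/trivgP/subsetP=> s /setIP[/setIP[_ Xs] /setIP[_ Us]].
apply/set1gP/permP=> x; rewrite perm1; rewrite !inE in Xs Us.
have [xX|xX] := boolP (x \in X); last exact: out_perm Xs xX.
by apply: (out_perm Us); rewrite (disjointFr dXU xX).
Qed.

Lemma bigdprod_Sym (r : seq {set T}) : uniq r -> {in r, forall X, splits_over X} ->
    {in r &, forall X Y : {set T}, X != Y -> [disjoint X & Y]} ->
  \big[dprod/1]_(X <- r) (G :&: Sym X) = G :&: Sym (\bigcup_(X <- r) X).
Proof.
elim: r => [_ _ _ | X r IHr /= /andP[rX r_uniq] splitXr dXr].
  rewrite !big_nil; apply/esym/trivgP/subsetP=> s /setIP[_].
  by rewrite inE => /perm_on_id ->; rewrite ?cards0.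
have Xr : X \in X :: r := mem_head X r.
have rXr Y : Y \in r -> Y \in X :: r by rewrite inE => ->; rewrite orbT.
rewrite !big_cons IHr // => [|Y /rXr | Y Z /rXr rY /rXr rZ]; last 2 first.
- exact: splitXr.
- exact: dXr.
apply: dprod_Sym_setU; first exact: splitXr.
rewrite bigcup_seq; apply: bigcup_disjoint => Y rY; apply: dXr (rXr Y rY) _ => //.
by apply: contraNneq rX => ->.
Qed.

End SplitSupports.

Section BigComponents.
Variables (disp : Order.disp_t) (T : finPOrderType disp) (e : rel T).
Hypothesis e_sym : symmetric e.

Lemma mem_big_component A x : A \in big_components e -> x \in A ->
  A =i connect e x.
Proof.
case/setIdP=> _ /existsP[a /eqP->]; rewrite !inE => ax y; rewrite !inE.
by apply/idP/idP; apply: connect_trans; rewrite // (sym_connect_sym e_sym).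
Qed.

Lemma big_component_closed A x y : A \in big_components e -> x \in A -> e x y ->
  y \in A.
Proof. by move=> compA xA xy; rewrite (mem_big_component compA xA) inE connect1. Qed.

Lemma big_component_eq A A' x : A \in big_components e -> A' \in big_components e ->
  x \in A -> x \in A' -> A = A'.
Proof.
move=> compA compA' xA xA'; apply/setP=> y.
by rewrite (mem_big_component compA xA) (mem_big_component compA' xA').
Qed.

Lemma big_component_edge A x : A \in big_components e -> x \in A ->
  exists y, e x y.
Proof.
move=> compA xA; have /setIdP[/card_gt1P[y [z [yA zA yz]]] _] := compA.
have [w wA wx] : exists2 w, w \in A & w != x.
  by case: (eqVneq y x) => [yx|]; [exists z; rewrite // -yx eq_sym | exists y].
move: wA; rewrite (mem_big_component compA xA) => /connectP[[|v p] /= ex wE].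
  by rewrite wE eqxx in wx.
by exists v; case/andP: ex.
Qed.

Lemma big_component_of_edge x y : irreflexive e -> e x y ->
  [set z | connect e x z] \in big_components e.
Proof.
move=> e_irr xy; apply/setIdP; split; last by apply/existsP; exists x.
apply/card_gt1P; exists x, y; rewrite !inE connect0 connect1 //.
by split=> //; apply: contraTneq xy => <-; rewrite e_irr.
Qed.

Lemma big_component_const (rT : eqType) (f : T -> rT) A :
    A \in big_components e -> {in A, forall x y, e x y -> f x = f y} ->
  {in A &, forall x y, f x = f y}.
Proof.
move=> compA fE x y xA; rewrite (mem_big_component compA xA).
have fA : closed e [pred z | (z \in A) && (f z == f x)].
  apply: (intro_closed (sym_connect_sym e_sym)) => u v uv /andP[uA /eqP fu].
  by rewrite inE -fu (fE u uA v uv) eqxx (big_component_closed compA uA uv).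
by move/(closed_connect fA); rewrite !inE xA eqxx => /esym/andP[_ /eqP].
Qed.

End BigComponents.

Section Crossings.
Variables (disp : Order.disp_t) (T : finPOrderType disp).
Implicit Types a b c d : T.

Lemma free31P : reflect
  (forall a b c d, a < b -> b < c -> d >< a -> d >< b -> d >< c -> False)
  (free31 T).
Proof.
apply: (iffP forallP) => [free a b c d ab bc da db dc | free a].
  by move: (free a) => /forallP/(_ b)/forallP/(_ c)/forallP/(_ d); rewrite ab bc da db dc.
by do 3!apply/forallP => ?; apply/negP => /and5P[]; apply: free.
Qed.

Lemma free31_comparable a b c d : free31 T ->
  a < b -> b < c -> d >< a -> d >< b -> d >=< c.
Proof. by move/free31P=> free ab bc da db; apply/negPn/negP; apply: free ab bc da db. Qed.

(* The relations [c < a] and [d < b] form an induced 2+2. *)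
Definition crossing c a d b := [&& c < a, d < b, ~~ (c < b) & ~~ (d < a)].

Lemma crossingC c a d b : crossing c a d b = crossing d b c a.
Proof. by apply/and4P/and4P=> -[]. Qed.

Lemma crossing_incomparable c a d b :
  crossing c a d b -> [&& a >< b, c >< d & c >< b].
Proof.
case/and4P=> ca db ncb nda.
have nba : ~~ (b < a) by apply: contra nda; apply: lt_trans.
apply/and3P; split.
- case: (comparableP a b) nba => // [ab|ab] _; last by rewrite -ab ca in ncb.
  by rewrite (lt_trans ca ab) in ncb.
- case: (comparableP c d) => // [cd|dc|cd]; last by rewrite cd db in ncb.
    by rewrite (lt_trans cd db) in ncb.
  by rewrite (lt_trans dc ca) in nda.
case: (comparableP c b) ncb => // [bc|bc] _; last by rewrite -bc ca in nba.
by rewrite (lt_trans bc ca) in nba.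
Qed.

Lemma toprP a b : reflect (exists c d, crossing c a d b) (topr a b).
Proof.
apply: (iffP andP) => [[/subsetPn[c] ca cb /subsetPn[d] db da] | [c [d]]].
  by exists c, d; rewrite !inE in ca cb db da; rewrite /crossing ca db cb da.
by case/and4P=> ca db ncb nda; split; apply/subsetPn; [exists c | exists d]; rewrite inE.
Qed.

Lemma botrP c d : reflect (exists a b, crossing c a d b) (botr c d).
Proof.
apply: (iffP andP) => [[/subsetPn[a] ca ad /subsetPn[b] db bc] | [a [b]]].
  by exists a, b; rewrite !inE in ca ad db bc; rewrite /crossing ca db ad bc.
by case/and4P=> ca db ncb nda; split; apply/subsetPn; [exists a | exists b]; rewrite inE.
Qed.

Lemma crossing_topr c a d b : crossing c a d b -> topr a b.
Proof. by move=> cr; apply/toprP; exists c, d. Qed.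

Lemma crossing_botr c a d b : crossing c a d b -> botr c d.
Proof. by move=> cr; apply/botrP; exists a, b. Qed.

Lemma toprC : symmetric (@topr _ T).
Proof. by move=> a b; rewrite /topr andbC. Qed.

Lemma botrC : symmetric (@botr _ T).
Proof. by move=> a b; rewrite /botr andbC. Qed.

Lemma toprxx : irreflexive (@topr _ T).
Proof. by move=> a; rewrite /topr subxx. Qed.

Lemma botrxx : irreflexive (@botr _ T).
Proof. by move=> a; rewrite /botr subxx. Qed.

Lemma crossing_feet_connect c a d b c' d' b' :
  crossing c a d b -> crossing c' a d' b' -> connect (@botr _ T) c c'.
Proof.
move=> cr cr'; have cd := connect1 (crossing_botr cr).
have d'c' : connect (@botr _ T) d' c'.
  by apply/connect1; rewrite botrC; apply: crossing_botr cr'.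
case/and4P: cr cr' => ca db ncb nda /and4P[c'a d'b' nc'b' nd'a].
have [db'|ndb'] := boolP (d < b').
  have c'd : crossing c' a d b' by rewrite /crossing c'a db' nc'b' nda.
  by apply: connect_trans cd (connect1 _); rewrite botrC; apply: crossing_botr c'd.
apply: connect_trans d'c'; have [d'b|nd'b] := boolP (d' < b).
  have cd' : crossing c a d' b by rewrite /crossing ca d'b ncb nd'a.
  exact/connect1/crossing_botr/cd'.
have dd' : crossing d b d' b' by rewrite /crossing db d'b' ndb' nd'b.
exact: connect_trans cd (connect1 (crossing_botr dd')).
Qed.

Lemma connect_topr_crossing a a' c d b c' d' b' : connect (@topr _ T) a a' ->
  crossing c a d b -> crossing c' a' d' b' -> connect (@botr _ T) c c'.
Proof.
move/connectP=> [p]; elim: p a c d b => [|v p IHp] a c d b /=.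
  by move=> _ -> cr cr'; apply: crossing_feet_connect cr cr'.
case/andP=> /toprP[c0 [d0 cr0]] path_p last_p cr cr'.
apply: connect_trans (crossing_feet_connect cr cr0) _.
apply: connect_trans (connect1 (crossing_botr cr0)) _.
by apply: IHp path_p last_p _ cr'; rewrite crossingC; apply: cr0.
Qed.

End Crossings.

Lemma free31_dual (disp : Order.disp_t) (T : finPOrderType disp) :
  free31 T -> free31 T^d.
Proof.
move/free31P=> free; apply/free31P=> a b c d ab bc da db dc.
by apply: (free c b a d) => //; rewrite comparable_sym.
Qed.

Lemma crossing_dual (disp : Order.disp_t) (T : finPOrderType disp) (c a d b : T) :
  crossing (T:=T^d) c a d b = crossing a c b d.
Proof. by apply/and4P/and4P=> -[]. Qed.

Lemma connect_botr_crossing (disp : Order.disp_t) (T : finPOrderType disp)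
    (c c' a d b a' d' b' : T) : connect (@botr _ T) c c' ->
  crossing c a d b -> crossing c' a' d' b' -> connect (@topr _ T) a a'.
Proof.
move=> cc' cr cr'; have := @connect_topr_crossing _ (T^d) c c' a b d a' b' d'.
by rewrite !crossing_dual; apply.
Qed.

Lemma topr_Uset (disp : Order.disp_t) (T : finPOrderType disp) (a b : T) :
  free31 T -> topr a b -> Uset a = Uset b.
Proof.
move=> free; wlog suff: a b / topr a b -> Uset a \subset Uset b.
  by move=> sub tab; apply/eqP; rewrite eqEsubset !sub // toprC.
case/toprP=> c [d cr]; apply/subsetP=> z; rewrite !inE => az.
have /and3P[ab _ cb] := crossing_incomparable cr.
case/and4P: cr => ca _ _ _.
have bz : b >=< z by apply: (free31_comparable free ca az); rewrite comparable_sym.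
case: (comparableP b z) bz => // [zb|bz] _.
  by have := lt_trans az zb; rewrite (incomparable_ltF ab).
by move: az; rewrite -bz (incomparable_ltF ab).
Qed.

Lemma botr_Dset (disp : Order.disp_t) (T : finPOrderType disp) (c d : T) :
  free31 T -> botr c d -> Dset c = Dset d.
Proof. by move/free31_dual=> free; apply: (@topr_Uset _ (T^d) c d free). Qed.

Section Tangles.
Variables (disp : Order.disp_t) (T : finPOrderType disp).
Hypothesis free : free31 T.
Implicit Types a b c d x y z : T.
Implicit Types A B X Y : {set T}.

Local Notation topC := (@toprC _ T).
Local Notation botC := (@botrC _ T).

Lemma topr_botrF x y z : topr x y -> botr x z = false.
Proof.
case/toprP=> c [d cr1]; apply/negP; case/botrP=> p [q cr2].
have /setP Uxy := topr_Uset free (crossing_topr cr1).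
have /setP Dxz := botr_Dset free (crossing_botr cr2).
have yE t : (y < t) = (x < t) by have := Uxy t; rewrite !inE.
have zE t : (t < z) = (t < x) by have := Dxz t; rewrite !inE.
have /and3P[_ _ cy] := crossing_incomparable cr1.
have /and3P[_ xz _] := crossing_incomparable cr2.
case/and4P: cr1 => cx _ _ _; case/and4P: cr2 => xp zq nxq nzp.
have yp : y < p by rewrite yE.
have yz : y >< z.
  case: (comparableP y z) => // [yz|zy|yz].
  - by rewrite yE (incomparable_ltF xz) in yz.
  - by rewrite (lt_trans zy yp) in nzp.
  by rewrite -yz yp in nzp.
have yq : y >=< q.
  by apply: (free31_comparable free (_ : c < z) zq); rewrite ?zE // comparable_sym.
case: (comparableP y q) yq => // [yq|qy|yq] _.
- by rewrite -yE yq in nxq.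
- by rewrite (lt_trans zq (lt_trans qy yp)) in nzp.
by rewrite -yq in zq; rewrite (lt_trans zq yp) in nzp.
Qed.

Definition tangle_pair A B := [/\ A \in tops T, B \in bottoms T & matched A B].

Lemma matchedP A B : reflect
  (exists a1 a2 b1 b2, [/\ a1 \in A, a2 \in A, b1 \in B, b2 \in B & crossing b1 a1 b2 a2])
  (matched A B).
Proof.
apply: (iffP idP) => [|[a1 [a2 [b1 [b2 [a1A a2A b1B b2B cr]]]]]].
  case/exists_inP=> a1 a1A /exists_inP[a2 a2A /exists_inP[b1 b1B /exists_inP[b2 b2B]]].
  case/and5P=> _ _ b1a1 b2a2 /and4P[_ _ b1a2 b2a1].
  by exists a1, a2, b1, b2; rewrite /crossing b1a1 b2a2 !incomparable_ltF.
have /and3P[a1a2 b1b2 b1a2] := crossing_incomparable cr.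
have /and3P[_ _ b2a1] : [&& a2 >< a1, b2 >< b1 & b2 >< a1].
  by apply: crossing_incomparable; rewrite crossingC.
case/and4P: cr => b1a1 b2a2 _ _.
apply/exists_inP; exists a1 => //; apply/exists_inP; exists a2 => //.
apply/exists_inP; exists b1 => //; apply/exists_inP; exists b2 => //.
by rewrite !incomparable_eqF // b1a1 b2a2 a1a2 b1b2 b1a2 b2a1.
Qed.

Lemma tangle_pair_of_crossing c a d b : crossing c a d b ->
  tangle_pair [set x | connect (@topr _ T) a x] [set x | connect (@botr _ T) c x].
Proof.
move=> cr; split.
- exact: big_component_of_edge (@toprxx _ T) (crossing_topr cr).
- exact: big_component_of_edge (@botrxx _ T) (crossing_botr cr).
apply/matchedP; exists a, b, c, d; split=> //; rewrite inE //.
  exact/connect1/crossing_topr/cr.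
exact/connect1/crossing_botr/cr.
Qed.

Lemma tangle_pair_crossing A B c a d b : tangle_pair A B -> crossing c a d b ->
  (a \in A) = (c \in B).
Proof.
case=> topA botB /matchedP[a1 [a2 [b1 [b2 [a1A _ b1B _ cr1]]]]] cr.
rewrite (mem_big_component topC topA a1A) (mem_big_component botC botB b1B) !inE.
apply/idP/idP => [a1a|b1c]; first exact: connect_topr_crossing a1a cr1 cr.
exact: connect_botr_crossing b1c cr1 cr.
Qed.

Lemma tangle_pair_bottom_uniq A B B' : tangle_pair A B -> tangle_pair A B' -> B = B'.
Proof.
wlog suff: B B' / tangle_pair A B -> tangle_pair A B' -> B \subset B'.
  by move=> sub AB AB'; apply/eqP; rewrite eqEsubset !sub.
move=> AB AB'; apply/subsetP=> x xB; have [_ botB _] := AB.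
have [y /botrP[a [b cr]]] := big_component_edge botC botB xB.
by rewrite -(tangle_pair_crossing AB' cr) (tangle_pair_crossing AB cr).
Qed.

Lemma tangle_pair_top_uniq A A' B : tangle_pair A B -> tangle_pair A' B -> A = A'.
Proof.
wlog suff: A A' / tangle_pair A B -> tangle_pair A' B -> A \subset A'.
  by move=> sub AB A'B; apply/eqP; rewrite eqEsubset !sub.
move=> AB A'B; apply/subsetP=> x xA; have [topA _ _] := AB.
have [y /toprP[c [d cr]]] := big_component_edge topC topA xA.
by rewrite (tangle_pair_crossing A'B cr) -(tangle_pair_crossing AB cr).
Qed.

Lemma tanglesP X :
  reflect (exists A B, tangle_pair A B /\ X = A :|: B) (X \in tangles T).
Proof.
apply: (iffP imset2P) => [[A B topA /setIdP[botB AB] ->] | [A [B [[topA botB AB] ->]]]].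
  by exists A, B.
by exists A B; rewrite // inE botB.
Qed.

Lemma tangle_eq X Y x : X \in tangles T -> Y \in tangles T -> x \in X -> x \in Y ->
  X = Y.
Proof.
case/tanglesP=> A [B [AB ->]] /tanglesP[A' [B' [A'B' ->]]].
have [[topA botB _] [topA' botB' _]] := (AB, A'B').
case/setUP=> [xA|xB] /setUP[xA'|xB'].
- have eA := big_component_eq topC topA topA' xA xA'.
  by subst A'; rewrite (tangle_pair_bottom_uniq AB A'B').
- have [y xy] := big_component_edge topC topA xA.
  by have [z] := big_component_edge botC botB' xB'; rewrite (topr_botrF z xy).
- have [y xy] := big_component_edge topC topA' xA'.
  by have [z] := big_component_edge botC botB xB; rewrite (topr_botrF z xy).
have eB := big_component_eq botC botB botB' xB xB'.
by subst B'; rewrite (tangle_pair_top_uniq AB A'B').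
Qed.

Lemma tangle_free_partP x :
  reflect (forall y, ~~ topr x y /\ ~~ botr x y) (x \in tangle_free_part T).
Proof.
rewrite inE; apply: (iffP idP) => [notX y | noedge].
  have notAB A B : tangle_pair A B -> x \notin A :|: B.
    move=> AB; apply: contra notX => xAB; apply/bigcupP; exists (A :|: B) => //.
    by apply/tanglesP; exists A, B.
  split; apply/negP.
    by case/toprP=> c [d /tangle_pair_of_crossing/notAB]; rewrite !inE connect0.
  by case/botrP=> a [b /tangle_pair_of_crossing/notAB]; rewrite !inE connect0 orbT.
apply/bigcupP=> -[_ /tanglesP[A [B [[topA botB _] ->]]]] /setUP[xA|xB].
  have [y xy] := big_component_edge topC topA xA.
  by have [/negP] := noedge y.
have [y xy] := big_component_edge botC botB xB.
by have [_ /negP] := noedge y.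
Qed.

Section TanglePair.
Variables A B : {set T}.
Hypothesis AB : tangle_pair A B.
Let topA : A \in tops T. Proof. by case: AB. Qed.
Let botB : B \in bottoms T. Proof. by case: AB. Qed.

Lemma tangle_top_lt z : {in A &, forall a a', (a < z) = (a' < z)}.
Proof.
apply: (big_component_const (f := fun a => a < z) topC topA) => a _ a'.
by move/(topr_Uset free)/setP/(_ z); rewrite !inE.
Qed.

Lemma tangle_bottom_gt z : {in B &, forall b b', (z < b) = (z < b')}.
Proof.
apply: (big_component_const (f := fun b => z < b) botC botB) => b _ b'.
by move/(botr_Dset free)/setP/(_ z); rewrite !inE.
Qed.

Lemma tangle_bottom_below b : b \in B -> exists2 a, a \in A & b < a.
Proof.
move=> bB; have [b' /botrP[a [a' cr]]] := big_component_edge botC botB bB.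
by exists a; [rewrite (tangle_pair_crossing AB cr) | case/and4P: cr].
Qed.

Lemma tangle_top_max a x : a \in A -> x \in A :|: B -> ~~ (a < x).
Proof.
move=> aA /setUP[xA|xB]; apply/negP => ax.
  by rewrite (tangle_top_lt _ aA xA) ltxx in ax.
have [a' a'A xa'] := tangle_bottom_below xB.
by move: (lt_trans ax xa'); rewrite (tangle_top_lt _ aA a'A) ltxx.
Qed.

Lemma mem_tangle_bottom x : x \in A :|: B -> (x \in B) = [exists y in A :|: B, x < y].
Proof.
move=> xAB; apply/idP/exists_inP => [xB | [y yAB xy]].
  by have [a aA xa] := tangle_bottom_below xB; exists a; rewrite ?inE ?aA.
case/setUP: xAB => // xA.
by rewrite (negbTE (tangle_top_max xA yAB)) in xy.
Qed.

Lemma tangle_top_gt_outside z : z \notin A :|: B ->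
  {in A &, forall a a', (z < a) = (z < a')}.
Proof.
move=> zAB; have zB : z \notin B by apply: contra zAB => zB; rewrite inE zB orbT.
have step a a' : a \in A -> topr a a' -> z < a -> z < a'.
  move=> aA /toprP[c [d cr]] za.
  have cB : c \in B by rewrite -(tangle_pair_crossing AB cr).
  have dB : d \in B := big_component_closed botC botB cB (crossing_botr cr).
  have : ~~ botr z d.
    by apply: contra zB => zd; apply: (big_component_closed botC botB dB); rewrite botrC.
  case/and4P: cr => _ da' _ nda; rewrite /botr negb_and !negbK.
  case/orP=> [/subsetP zd | /subsetP dz].
    by move: (zd a); rewrite !inE za (negbTE nda) => /(_ isT).
  by move: (dz a'); rewrite !inE da' => /(_ isT).
apply: (big_component_const (f := fun a => z < a) topC topA) => a aA a' aa'.
apply/idP/idP; first exact: step.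
have a'A := big_component_closed topC topA aA aa'.
by apply: step a'A _; rewrite toprC.
Qed.

Lemma tangle_bottom_lt_outside z : z \notin A :|: B ->
  {in B &, forall b b', (b < z) = (b' < z)}.
Proof.
move=> zAB; have zA : z \notin A by apply: contra zAB => zA; rewrite inE zA.
have step b b' : b \in B -> botr b b' -> b < z -> b' < z.
  move=> bB /botrP[a [a' cr]] bz.
  have aA : a \in A by rewrite (tangle_pair_crossing AB cr).
  have a'A : a' \in A := big_component_closed topC topA aA (crossing_topr cr).
  have : ~~ topr z a'.
    by apply: contra zA => za'; apply: (big_component_closed topC topA a'A); rewrite toprC.
  case/and4P: cr => _ b'a' nba' _; rewrite /topr negb_and !negbK.
  case/orP=> [/subsetP za' | /subsetP a'z].
    by move: (za' b); rewrite !inE bz (negbTE nba') => /(_ isT).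
  by move: (a'z b'); rewrite !inE b'a' => /(_ isT).
apply: (big_component_const (f := fun b => b < z) botC botB) => b bB b' bb'.
apply/idP/idP; first exact: step.
have b'B := big_component_closed botC botB bB bb'.
by apply: step b'B _; rewrite botrC.
Qed.

End TanglePair.

End Tangles.

Lemma AutP_group_set (disp : Order.disp_t) (T : finPOrderType disp) : group_set (AutP T).
Proof.
apply/group_setP; split=> [|s t]; rewrite !inE.
  by apply/'forall_forallP=> x y; rewrite !perm1.
move=> /'forall_forallP sE /'forall_forallP tE; apply/'forall_forallP=> x y.
by rewrite !permM (eqP (tE _ _)).
Qed.

Canonical AutP_group disp T := Group (@AutP_group_set disp T).

Section Automorphisms.
Variables (disp : Order.disp_t) (T : finPOrderType disp).
Implicit Types x y z : T.
Implicit Types (X : {set T}) (s : {perm T}).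

Local Notation topC := (@toprC _ T).
Local Notation botC := (@botrC _ T).

Lemma AutP_le s x y : s \in AutP T -> (s x <= s y) = (x <= y).
Proof. by rewrite inE => /'forall_forallP/(_ x y)/eqP. Qed.

Lemma AutP_lt s x y : s \in AutP T -> (s x < s y) = (x < y).
Proof. by move=> sA; rewrite !lt_def (AutP_le _ _ sA) (inj_eq perm_inj). Qed.

Lemma AutP_on X s : perm_on X s -> {in X &, forall x y, (s x <= s y) = (x <= y)} ->
  (forall x z, x \in X -> z \notin X -> ((s x < z) = (x < z)) * ((z < s x) = (z < x))) ->
  s \in AutP T.
Proof.
move=> sX sle sout; have sXE x : (s x \in X) = (x \in X) by apply: perm_closed.
have leE x z : x \in X -> z \notin X -> ((x <= z) = (x < z)) * ((z <= x) = (z < x)).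
  move=> xX zX; have xz : x != z by apply: contraNneq zX => <-.
  by rewrite !le_eqVlt (negbTE xz) eq_sym (negbTE xz).
rewrite inE; apply/'forall_forallP=> x y; apply/eqP.
have [xX|xX] := boolP (x \in X); have [yX|yX] := boolP (y \in X).
- exact: sle.
- by rewrite (out_perm sX yX) (leE (s x) y) ?sXE // (leE x y) // sout.
- by rewrite (out_perm sX xX) (leE (s y) x) ?sXE // (leE y x) // sout.
by rewrite (out_perm sX xX) (out_perm sX yX).
Qed.

Lemma AutP_Dset s x : s \in AutP T -> Dset (s x) = s @: Dset x.
Proof.
move=> sA; apply/setP=> y; rewrite -preim_permV !inE -{1}(permKV s y).
by rewrite (AutP_lt _ _ sA).
Qed.

Lemma AutP_Uset s x : s \in AutP T -> Uset (s x) = s @: Uset x.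
Proof.
move=> sA; apply/setP=> y; rewrite -preim_permV !inE -{1}(permKV s y).
by rewrite (AutP_lt _ _ sA).
Qed.

Lemma AutP_Dset_topr s x : s \in AutP T -> Dset (s x) = Dset x \/ topr x (s x).
Proof.
move=> sA; have cardD : #|Dset x| = #|Dset (s x)|.
  by rewrite AutP_Dset // card_imset //; apply: perm_inj.
by case: (eq_card_subset_or cardD) => [->|]; [left | right].
Qed.

Lemma AutP_Uset_botr s x : s \in AutP T -> Uset (s x) = Uset x \/ botr x (s x).
Proof.
move=> sA; have cardU : #|Uset x| = #|Uset (s x)|.
  by rewrite AutP_Uset // card_imset //; apply: perm_inj.
by case: (eq_card_subset_or cardU) => [->|]; [left | right].
Qed.

Lemma AutPart_le X s : s \in AutPart X -> {in X &, forall x y, (s x <= s y) = (x <= y)}.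
Proof. by case/setIdP=> _ /'forall_in_forall_inP sX x y xX yX; apply/eqP/sX. Qed.

Lemma AutPart_lt X s : s \in AutPart X -> {in X &, forall x y, (s x < s y) = (x < y)}.
Proof. by move=> sX x y xX yX; rewrite !lt_def (AutPart_le sX) // (inj_eq perm_inj). Qed.

Lemma AutPart_perm_on X s : s \in AutPart X -> perm_on X s.
Proof. by case/setIdP. Qed.

Lemma approxP x y : reflect (Dset x = Dset y /\ Uset x = Uset y) (approx x y).
Proof. by apply: (iffP andP) => [[/eqP-> /eqP->] | [-> ->]]. Qed.

Lemma approx_eq_l x y z : approx x y -> approx x z = approx y z.
Proof. by case/approxP=> Dxy Uxy; rewrite /approx Dxy Uxy. Qed.

Lemma AutPart_clone C : C \in clone_sets T -> AutPart C \subset AutP T.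
Proof.
case/imsetP=> x0 _ ->; set C' := [set _ in _ | _]; apply/subsetP=> s sC.
have sC' := AutPart_perm_on sC.
apply: (AutP_on sC' (AutPart_le sC)) => x z xC _.
have sxC : s x \in C' by rewrite (perm_closed _ sC').
move: xC sxC; rewrite !inE => /andP[_ /approxP[D1 U1]] /andP[_ /approxP[D2 U2]].
have /setP/(_ z) := etrans (esym U2) U1; have /setP/(_ z) := etrans (esym D2) D1.
by rewrite !inE => -> ->.
Qed.

Lemma AutPart_tangle A B : free31 T -> tangle_pair A B -> AutPart (A :|: B) \subset AutP T.
Proof.
move=> free AB; apply/subsetP=> s sX; have sX' := AutPart_perm_on sX.
have sB x : x \in A :|: B -> (s x \in B) = (x \in B).
  move=> xX; have sxX : s x \in A :|: B by rewrite perm_closed.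
  rewrite !(mem_tangle_bottom free AB) //.
  apply/exists_inP/exists_inP => [[y yX sxy] | [y yX xy]].
    exists ((s^-1)%g y); first by rewrite perm_closed // perm_onV.
    by rewrite -(AutPart_lt sX) ?permKV // perm_closed // perm_onV.
  by exists (s y); rewrite ?perm_closed ?(AutPart_lt sX).
apply: (AutP_on sX' (AutPart_le sX)) => x z xX zX.
have sxX : s x \in A :|: B by rewrite perm_closed.
have [xB|xB] := boolP (x \in B).
  have sxB : s x \in B by rewrite sB.
  by rewrite (tangle_bottom_lt_outside AB zX sxB xB) (tangle_bottom_gt free AB z sxB xB).
have xA : x \in A by case/setUP: xX xB => // ->.
have sxA : s x \in A by case/setUP: sxX => //; rewrite sB // (negbTE xB).
by rewrite (tangle_top_lt free AB z sxA xA) (tangle_top_gt_outside AB zX sxA xA).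
Qed.

Lemma AutP_top s A x : s \in AutP T -> A \in tops T -> x \in A -> s x \in A.
Proof.
move=> sA topA xA; case: (AutP_Dset_topr x sA) => [Dsx|]; last first.
  exact: (big_component_closed topC topA xA).
have [v xv] := big_component_edge topC topA xA.
have vA := big_component_closed topC topA xA xv.
by apply: (big_component_closed topC topA vA); rewrite toprC /topr Dsx.
Qed.

Lemma AutP_bottom s B x : s \in AutP T -> B \in bottoms T -> x \in B -> s x \in B.
Proof.
move=> sA botB xB; case: (AutP_Uset_botr x sA) => [Usx|]; last first.
  exact: (big_component_closed botC botB xB).
have [v xv] := big_component_edge botC botB xB.
have vB := big_component_closed botC botB xB xv.
by apply: (big_component_closed botC botB vB); rewrite botrC /botr Usx.
Qed.

Lemma AutP_tangle_free_part s x : s \in AutP T -> x \in tangle_free_part T ->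
  approx x (s x) /\ s x \in tangle_free_part T.
Proof.
move=> sA /tangle_free_partP noedge.
have Dsx : Dset (s x) = Dset x.
  by case: (AutP_Dset_topr x sA) => // txs; have [/negP] := noedge (s x).
have Usx : Uset (s x) = Uset x.
  by case: (AutP_Uset_botr x sA) => // bxs; have [_ /negP] := noedge (s x).
split; first by apply/approxP.
by apply/tangle_free_partP => y; rewrite /topr /botr Dsx Usx; apply: noedge.
Qed.

End Automorphisms.

Section Parts.
Variables (disp : Order.disp_t) (T : finPOrderType disp).
Hypothesis free : free31 T.
Implicit Types (x y : T) (X Y : {set T}) (s : {perm T}).

Lemma parts_cover : \bigcup_(X in parts T) X = [set: T].
Proof.
apply/eqP; rewrite eqEsubset subsetT; apply/subsetP=> x _; apply/bigcupP.
have [xtf|] := boolP (x \in tangle_free_part T).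
  exists [set y in tangle_free_part T | approx x y]; last by rewrite inE xtf /approx !eqxx.
  by rewrite inE; apply/orP; left; apply/imsetP; exists x.
by rewrite inE negbK => /bigcupP[X XT xX]; exists X; rewrite // inE XT orbT.
Qed.

Lemma parts_disjoint X Y : X \in parts T -> Y \in parts T -> X != Y -> [disjoint X & Y].
Proof.
have clone_tf C y : C \in clone_sets T -> y \in C -> y \in tangle_free_part T.
  by case/imsetP=> y0 _ -> /setIdP[].
have tangle_tf Z y : Z \in tangles T -> y \in Z -> y \notin tangle_free_part T.
  by move=> ZT yZ; rewrite inE negbK; apply/bigcupP; exists Z.
move=> /setUP[XC|XT] /setUP[YC|YT]; apply: contraNT => /pred0Pn[x /andP[xX xY]].
- move: (XC) (YC) xX xY => /imsetP[x1 _ ->] /imsetP[x2 _ ->] /setIdP[_ x1x] /setIdP[_ x2x].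
  by apply/eqP/setP=> y; rewrite !inE (approx_eq_l _ x1x) (approx_eq_l _ x2x).
- by have := tangle_tf _ _ YT xY; rewrite (clone_tf _ _ XC xX).
- by have := tangle_tf _ _ XT xX; rewrite (clone_tf _ _ YC xY).
exact/eqP/(tangle_eq free XT YT xX xY).
Qed.

Lemma AutPart_sub X : X \in parts T -> AutPart X \subset AutP T.
Proof.
case/setUP=> [XC | /tanglesP[A [B [AB ->]]]]; first exact: AutPart_clone.
exact: AutPart_tangle.
Qed.

Lemma AutPartE X : X \in parts T -> AutPart X = AutP T :&: Sym X.
Proof.
move=> XP; apply/setP=> s; rewrite in_setI [s \in Sym X]inE.
apply/idP/andP=> [sX | [sA sX]].
  by split; [apply: (subsetP (AutPart_sub XP)) | apply: AutPart_perm_on].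
by rewrite inE sX; apply/'forall_in_forall_inP=> x y xX yX; rewrite (AutP_le _ _ sA).
Qed.

Lemma AutP_part s X x : s \in AutP T -> X \in parts T -> x \in X -> s x \in X.
Proof.
move=> sA /setUP[/imsetP[x0 _ ->] | /tanglesP[A [B [[topA botB _] ->]]]].
  case/setIdP=> xtf x0x; have [xsx sxtf] := AutP_tangle_free_part sA xtf.
  by apply/setIdP; rewrite (approx_eq_l _ x0x).
by case/setUP=> [/(AutP_top sA topA) | /(AutP_bottom sA botB)] sx; rewrite inE sx ?orbT.
Qed.

Lemma AutP_splits_over_parts X : X \in parts T -> splits_over (AutP_group T) X.
Proof.
move=> XP; have nX s : s \in AutP T -> s \in 'N(X | 'P)%g.
  move=> sA; apply/astabsP=> x /=; apply/idP/idP; last exact: AutP_part.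
  by move/(AutP_part (groupVr sA) XP); rewrite -permM mulgV perm1.
apply/andP; split; first by apply/subsetP=> s /nX.
apply/forall_inP=> s sA; apply: (subsetP (AutPart_sub XP)).
rewrite inE restr_perm_on; apply/'forall_in_forall_inP=> x y xX yX.
by rewrite !restr_permE ?nX // (AutP_le _ _ sA).
Qed.

End Parts.

Theorem theorem2p14 (disp : Order.disp_t) (T : finPOrderType disp) :
  free31 T ->
  (forall X, X \in parts T -> AutPart X \subset AutP T) /\
  (\big[dprod/1]_(X in parts T) AutPart X)%g = AutP T.
Proof.
move=> free; split=> [X|]; first exact: AutPart_sub.
rewrite -big_enum (eq_big_seq (fun X => AutP T :&: Sym X)) => [|X]; last first.
  by rewrite mem_enum => /(AutPartE free).
rewrite bigdprod_Sym ?enum_uniq // => [|X|X Y]; rewrite ?mem_enum.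
- rewrite bigcup_seq (eq_bigl _ _ (mem_enum _)) parts_cover.
  by apply/setIidPl/subsetP=> s _; rewrite inE; apply/subsetP.
- exact: AutP_splits_over_parts.
exact: parts_disjoint.
Qed.
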